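(* Drop the abundance condition and assume instead only $\mu\ge1/n(\boldsymbol h)$. Then for every $\boldsymbol m\in[0,1]^2$ there is an equilibrium, and every equilibrium maximizes total output over feasible allocations. Moreover: (a) If $\boldsymbol m\in R_s\cup R_t$ or $\boldsymbol m\in R_b\cap K$, then the following is an equilibrium: $r^*=F(\boldsymbol m)$, $w^*=\max\{\bar w_s,\bar w_b,\bar w_t\}$, and the allocation is $\alpha_s^*=1,\mu_s^*=\mu$ if $\boldsymbol m\in R_s$; $\alpha_b^*=1,\mu_b^*=n(\boldsymbol m),\mu_s^*=\mu-n(\boldsymbol m)$ if $\boldsymbol m\in R_b\cap K$; $\alpha_t^*=1,\mu_t^*=1/n(\boldsymbol h),\mu_s^*=\mu-1/n(\boldsymbol h)$ if $\boldsymbol m\in R_t$. (b) If $\boldsymbol m\in R_b\cap K^c\cap R_m$, then only $b$ and $t$ firms form: $\alpha_b^*+\alpha_t^*=1$, $\mu_b^*+\mu_t^*=\mu$ with $\mu_b^*=\alpha_b^*n(\boldsymbol m)$, $\mu_t^*=\alpha_t^*/n(\boldsymbol h)$, and the prices are $r^*=F(\boldsymbol m)+\frac{n(\boldsymbol h)(\bar w_b-\bar w_t)}{n(\boldsymbol m)n(\boldsymbol h)-1}$, $w^*=\bar w_b-\frac{n(\boldsymbol m)n(\boldsymbol h)(\bar w_b-\bar w_t)}{n(\boldsymbol m)n(\boldsymbol h)-1}$. (c) If $\boldsymbol m\in R_b\cap K^c\cap R_m^c$, then only $b$ and single-layer non-automated firms form: $\alpha_b^*=\mu/n(\boldsymbol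 m)$, $\alpha_s^*=1-\alpha_b^*$, $\mu_b^*=\mu$, with prices $r^*=F(\boldsymbol m\vee\boldsymbol h)-F(\boldsymbol h)/n(\boldsymbol m)$ and $w^*=F(\boldsymbol h)$.
   Context: Fix a cumulative distribution function $F$ on $[0,1]^2$ with a density $f$ that has full support on $[0,1]^2$; a problem $\boldsymbol x$ is drawn from $F$. Fix $c\in(0,1)$, human knowledge $\boldsymbol h\in(0,1)^2$ (unit mass of humans, one unit of time each), and a mass $\mu>0$ of machines with common knowledge $\boldsymbol m\in[0,1]^2$ (one unit of time each). Write $\boldsymbol x\vee\boldsymbol y$ for the componentwise maximum and, for $F(\boldsymbol x)<1$, $n(\boldsymbol x)=\frac{1}{c(1-F(\boldsymbol x))}$. Given wage $w\ge0$ and rental rate $r\ge0$, firm types and profits: single-layer non-automated $F(\boldsymbol h)-w$; single-layer automated $F(\boldsymbol m)-r$; bottom-automated $b$ (one human solver, $n(\boldsymbol m)$ machine workers; available only when $F(\boldsymbol m)<1$) $\Pi_b=n(\boldsymbol m)[F(\boldsymbol m\vee\boldsymbol h)-r]-w$; top-automated $t$ (one machine solver, $n(\boldsymbol h)$ human workers) $\Pi_t=n(\boldsymbol h)[F(\boldsymbol m\vee\boldsymbol h)-w]-r$. A feasible allocation is $(\alpha_s,\alpha_b,\alpha_t,\mu_s,\mu_b,\mu_t)\ge0$ with $\mu_b=\alpha_bn(\boldsymbol m)$, $\mu_t=\alpha_t/n(\boldsymbol h)$, $\alpha_s+\alpha_b+\alpha_t=1$, $\mu_s+\mu_b+\mu_t=\mu$;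 total output $Y=\alpha_bn(\boldsymbol m)F(\boldsymbol m\vee\boldsymbol h)+\alpha_tF(\boldsymbol m\vee\boldsymbol h)+\alpha_sF(\boldsymbol h)+\mu_sF(\boldsymbol m)$. An equilibrium is a feasible allocation and prices $(w,r)\ge0$ such that all firm types have nonpositive profit and types used with positive mass earn zero profit. Define $\bar w_s=F(\boldsymbol h)$, $\bar w_b=n(\boldsymbol m)(F(\boldsymbol m\vee\boldsymbol h)-F(\boldsymbol m))$ (with $\bar w_b:=0$ if $F(\boldsymbol m)=1$), $\bar w_t=F(\boldsymbol m\vee\boldsymbol h)-F(\boldsymbol m)/n(\boldsymbol h)$; $R_s=\{\boldsymbol m:\bar w_s\ge\max\{\bar w_b,\bar w_t\}\}$, $R_b=\{\boldsymbol m:\bar w_b>\max\{\bar w_s,\bar w_t\}\}$, $R_t=[0,1]^2\setminus(R_s\cup R_b)$; $K=\{\boldsymbol m\in[0,1]^2:F(\boldsymbol m)<1,\ \mu\ge n(\boldsymbol m)\}$; $R_m=\{\boldsymbol m\in[0,1]^2:\bar w_b-\bar w_s\le n(\boldsymbol m)n(\boldsymbol h)(\bar w_t-\bar w_s)\}$. Complements are taken in $[0,1]^2$. *)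

From HB Require Import structures.
From mathcomp Require Import all_boot all_order all_algebra.
From mathcomp Require Import all_classical all_reals all_analysis.
Set Implicit Arguments. Unset Strict Implicit. Unset Printing Implicit Defensive.
Import Order.TTheory GRing.Theory Num.Theory.
Import numFieldNormedType.Exports.
Local Open Scope classical_set_scope.
Local Open Scope ring_scope.

Section Defs.
Variable R : realType.

Definition unit_sq : set (R * R) := `[0%R, 1%R] `*` `[0%R, 1%R].

Definition leb2 := ((@lebesgue_measure R) \x (@lebesgue_measure R))%E.

Definition full_support_density (f : R * R -> R) : Prop :=
  [/\ measurable_fun unit_sq f,
      (forall z, z \in unit_sq -> 0 <= f z),
      (\int[leb2]_(z in unit_sq) (f z)%:E = 1)%E &
      (forall z e, z \in unit_sq -> 0 < e ->
         (0 < \int[leb2]_(y in unit_sq `&` ball z e) (f y)%:E)%E) ].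

Definition cdf2 (f : R * R -> R) (x : R * R) : R :=
  fine (\int[leb2]_(z in `[0%R, x.1] `*` `[0%R, x.2]) (f z)%:E).

Definition vjoin (x y : R * R) : R * R := (Num.max x.1 y.1, Num.max x.2 y.2).

Record alloc := Alloc {
  al_s : R; al_b : R; al_t : R; mu_s : R; mu_b : R; mu_t : R }.

Variables (F : R * R -> R) (c : R) (h : R * R) (mu : R).

(* n(x) = 1 / (c (1 - F x)) ; only meaningful when F x < 1 *)
Definition nn (x : R * R) : R := (c * (1 - F x))^-1.

Variable m : R * R.

Definition profit_s (w : R) := F h - w.
Definition profit_a (r : R) := F m - r.
Definition profit_b (w r : R) := nn m * (F (vjoin m h) - r) - w.
Definition profit_t (w r : R) := nn h * (F (vjoin m h) - w) - r.

(* the bottom-automated type is available only when F m < 1 *)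
Definition feasible (a : alloc) : Prop :=
  [/\ [/\ 0 <= al_s a, 0 <= al_b a & 0 <= al_t a],
      [/\ 0 <= mu_s a, 0 <= mu_b a & 0 <= mu_t a],
      mu_b a = al_b a * nn m /\ mu_t a = al_t a / nn h,
      al_s a + al_b a + al_t a = 1 /\ mu_s a + mu_b a + mu_t a = mu &
      (0 < al_b a -> F m < 1) ].

Definition output (a : alloc) : R :=
  al_b a * nn m * F (vjoin m h) + al_t a * F (vjoin m h)
  + al_s a * F h + mu_s a * F m.

Definition equilibrium (a : alloc) (w r : R) : Prop :=
  [/\ feasible a, 0 <= w, 0 <= r,
      [/\ profit_s w <= 0, profit_a r <= 0,
          (F m < 1 -> profit_b w r <= 0) & profit_t w r <= 0] &
      [/\ (0 < al_s a -> profit_s w = 0), (0 < mu_s a -> profit_a r = 0),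
          (0 < al_b a -> profit_b w r = 0) & (0 < al_t a -> profit_t w r = 0)] ].

Definition output_max (a : alloc) : Prop :=
  feasible a /\ forall a', feasible a' -> output a' <= output a.

Definition wbar_s := F h.
Definition wbar_b := if F m < 1 then nn m * (F (vjoin m h) - F m) else 0.
Definition wbar_t := F (vjoin m h) - F m / nn h.

Definition in_Rs := Num.max wbar_b wbar_t <= wbar_s.
Definition in_Rb := Num.max wbar_s wbar_t < wbar_b.
Definition in_Rt := ~ in_Rs /\ ~ in_Rb.
Definition in_K := F m < 1 /\ nn m <= mu.
Definition in_Rm := wbar_b - wbar_s <= nn m * nn h * (wbar_t - wbar_s).

End Defs.
Arguments unit_sq {R}.

From HB Require Import structures.
From mathcomp Require Import all_boot all_order all_algebra.
From mathcomp Require Import all_classical all_reals all_analysis.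
From mathcomp Require Import ring lra measurable_realfun.
(* Equilibrium prices are the dual variables of the linear program "maximize
   total output over feasible allocations": w and r are the shadow prices of
   human and machine time.  Nonpositive profits of every firm type bound the
   output of any feasible allocation by w + mu r (weak duality), and zero
   profits of the types in use make the equilibrium allocation attain this
   bound (complementary slackness), so equilibria maximize output.  Existence
   is by the explicit candidates (a)-(c): once profits are written in terms of
   the wbar's, their sign conditions are exactly the inequalities defining the
   regions R_s, R_b, R_t, K and R_m, while mu >= 1/n(h) makes the mixed
   allocation of case (b) feasible.  The only analytic facts used about F are
   F >= 0 and F h < 1, the latter because the density charges every
   neighbourhood of the corner (1, 1), which lies outside [0, h.1] x [0, h.2]. *)

Set Implicit Arguments.
Unset Strict Implicit.
Unset Printing Implicit Defensive.

Import Order.TTheory GRing.Theory Num.Theory.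
Import numFieldNormedType.Exports.
Local Open Scope classical_set_scope.
Local Open Scope ring_scope.

Section CDF.
Variable R : realType.

Lemma in_unit_sq (z : R * R) : z \in unit_sq <-> 0 <= z.1 <= 1 /\ 0 <= z.2 <= 1.
Proof. by rewrite in_setE /unit_sq /= !in_itv. Qed.

Lemma box_sub_unit_sq (x : R * R) : x \in unit_sq ->
  `[0, x.1] `*` `[0, x.2] `<=` unit_sq.
Proof.
move=> /in_unit_sq[/andP[_ x1] /andP[_ x2]] z [/=].
rewrite !in_itv /= => /andP[z10 z1] /andP[z20 z2].
rewrite -in_setE; apply/in_unit_sq.
by rewrite z10 z20 (le_trans z1 x1) (le_trans z2 x2).
Qed.

Lemma box_disjoint_corner_ball (x : R * R) :
  [disjoint `[0, x.1] `*` `[0, x.2] &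
             ball ((1 : R), (1 : R)) (Num.min (1 - x.1) (1 - x.2))].
Proof.
apply/disj_setPS => z [[/= z1 _] [/= b1 _]].
move: z1 b1; rewrite in_itv /= /ball /= ltr_distlC => /andP[_ zx] /andP[zb _].
have : Num.min (1 - x.1) (1 - x.2) <= 1 - x.1 by rewrite ge_min lexx.
lra.
Qed.

Lemma cdf2_ge0 (f : R * R -> R) (x : R * R) : full_support_density f ->
  x \in unit_sq -> 0 <= cdf2 f x.
Proof.
case=> _ f0 _ _ /box_sub_unit_sq sub; apply/fine_ge0/integral_ge0 => z /sub zU.
by rewrite lee_fin f0 // in_setE.
Qed.

Lemma cdf2_lt1 (f : R * R -> R) (x : R * R) : full_support_density f ->
  x \in unit_sq -> x.1 < 1 -> x.2 < 1 -> cdf2 f x < 1.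
Proof.
move=> [mf f0 int1 fpos] xU x1 x2.
set A := `[0, x.1] `*` `[0, x.2].
set e := Num.min (1 - x.1) (1 - x.2).
set B := unit_sq `&` ball ((1 : R), (1 : R)) e.
have mU : measurable (@unit_sq R) by apply: measurableX; exact: measurable_itv.
have mA : measurable A by apply: measurableX; exact: measurable_itv.
have mB : measurable B.
  apply: measurableI => //.
  by apply: measurableX; rewrite ball_itv; exact: measurable_itv.
have AU := box_sub_unit_sq xU.
have ABU : A `|` B `<=` unit_sq by move=> z [/AU //|[]].
have fE0 z : unit_sq z -> (0 <= (f z)%:E)%E.
  by move=> zU; rewrite lee_fin f0 // in_setE.
have dAB : [disjoint A & B].
  move/disj_setPRL: (box_disjoint_corner_ball x) => ballA.
  by apply/disj_setPRL => z [_ /ballA].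
have mfE : measurable_fun unit_sq (fun z => (f z)%:E) by apply/measurable_EFinP.
have intAB : (\int[@leb2 R]_(z in A `|` B) (f z)%:E <= 1)%E.
  by rewrite -int1; apply: ge0_subset_integral => //; exact: measurableU.
rewrite ge0_integral_setU // in intAB; last 2 first.
- exact: measurable_funS mU ABU mfE.
- by move=> z /ABU /fE0.
have intB : (0 < \int[@leb2 R]_(z in B) (f z)%:E)%E.
  apply: fpos; first by apply/in_unit_sq; rewrite /= ler01 lexx.
  by rewrite lt_min !subr_gt0 x1 x2.
have intA : (0 <= \int[@leb2 R]_(z in A) (f z)%:E)%E.
  by apply: integral_ge0 => z /AU /fE0.
rewrite /cdf2 -/A; move: intAB intB intA.
case: (\int[@leb2 R]_(z in A) (f z)%:E)%E => [a||];
  case: (\int[@leb2 R]_(z in B) (f z)%:E)%E => [b||] //=.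
by rewrite !lee_fin !lte_fin; lra.
Qed.

End CDF.

Lemma mul_slack (R : numDomainType) (x y : R) :
  0 <= x -> (0 < x -> y = 0) -> x * y = 0.
Proof.
by rewrite le0r => /orP[/eqP->|/[swap]/[apply]->]; rewrite ?mul0r ?mulr0.
Qed.

Section Equilibria.
Variables (R : realType) (F : R * R -> R) (c mu : R) (h m : R * R).
Hypotheses (c_gt0 : 0 < c) (Fh_ge0 : 0 <= F h) (Fh_lt1 : F h < 1)
  (Fm_ge0 : 0 <= F m) (mu_gt0 : 0 < mu) (mu_ge_inv_nh : (nn F c h)^-1 <= mu).

Local Notation nh := (nn F c h).
Local Notation nm := (nn F c m).
Local Notation Fv := (F (vjoin m h)).
Local Notation ws := (wbar_s F h).
Local Notation wb := (wbar_b F c h m).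
Local Notation wt := (wbar_t F c h m).
Local Notation equilibrium := (equilibrium F c h mu m).

Lemma nn_gt0 x : F x < 1 -> 0 < nn F c x.
Proof. by move=> Fx1; rewrite /nn invr_gt0 mulr_gt0 // subr_gt0. Qed.

Lemma nh_neq0 : nh != 0.
Proof. by rewrite gt_eqF // nn_gt0. Qed.

Lemma profit_t_wbar w r : profit_t F c h m w r = nh * (wt - w) + (F m - r).
Proof. by rewrite /profit_t /wbar_t; field; exact: nh_neq0. Qed.

Lemma profit_b_wbar w r : F m < 1 ->
  profit_b F c h m w r = (wb - w) + nm * (F m - r).
Proof. by move=> Fm1; rewrite /profit_b /wbar_b Fm1; ring. Qed.

Lemma profit_t_scaled w r : w + r / nh - Fv = - profit_t F c h m w r / nh.
Proof. by rewrite /profit_t; field; exact: nh_neq0. Qed.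

(* Weak duality: w and r price human and machine time, and a firm type with
   nonpositive profit cannot produce more than the value of the time it uses. *)
Lemma output_le_value a w r : feasible F c h mu m a ->
  profit_s F h w <= 0 -> profit_a F m r <= 0 ->
  (F m < 1 -> profit_b F c h m w r <= 0) -> profit_t F c h m w r <= 0 ->
  output F c h m a <= w + mu * r.
Proof.
move=> [[as0 ab0 at0] [ms0 _ _] [mbE mtE] [sa sm] ab_Fm] ps pa pb pt.
have es : 0 <= al_s a * (w - F h) by rewrite mulr_ge0 // subr_ge0 -subr_le0.
have ea : 0 <= mu_s a * (r - F m) by rewrite mulr_ge0 // subr_ge0 -subr_le0.
have eb : 0 <= al_b a * - profit_b F c h m w r.
  move: ab0; rewrite le0r => /orP[/eqP->|ab_gt0]; first by rewrite mul0r.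
  by apply: mulr_ge0; [exact: ltW | rewrite oppr_ge0; exact: pb (ab_Fm ab_gt0)].
have et : 0 <= al_t a * (w + r / nh - Fv).
  rewrite profit_t_scaled; apply/mulr_ge0/mulr_ge0 => //.
    by rewrite oppr_ge0.
  by rewrite invr_ge0 ltW // nn_gt0.
have sw : w = al_s a * w + al_b a * w + al_t a * w by rewrite -!mulrDl sa mul1r.
have sr : mu * r = mu_s a * r + al_b a * nm * r + al_t a / nh * r.
  by rewrite -sm mbE mtE !mulrDl.
move: eb; rewrite /profit_b /output; lra.
Qed.

(* Complementary slackness: every firm type in use breaks even. *)
Lemma equilibrium_output a w r : equilibrium a w r ->
  output F c h m a = w + mu * r.
Proof.
move=> [[[as0 ab0 at0] [ms0 _ _] [mbE mtE] [sa sm] _] _ _ _ [ps pa pb pt]].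
have es := mul_slack as0 ps; have ea := mul_slack ms0 pa.
have eb := mul_slack ab0 pb; have et := mul_slack at0 pt.
have et' : al_t a * (w + r / nh - Fv) = 0.
  by rewrite profit_t_scaled mulNr mulrN mulrA et mul0r oppr0.
have sw : w = al_s a * w + al_b a * w + al_t a * w by rewrite -!mulrDl sa mul1r.
have sr : mu * r = mu_s a * r + al_b a * nm * r + al_t a / nh * r.
  by rewrite -sm mbE mtE !mulrDl.
move: es ea eb; rewrite /profit_s /profit_a /profit_b /output; lra.
Qed.

Lemma equilibrium_output_max a w r : equilibrium a w r -> output_max F c h mu m a.
Proof.
move=> eq_awr; split; first by case: eq_awr.
move=> a' fa'; rewrite (equilibrium_output eq_awr).
by case: eq_awr => _ _ _ [ps pa pb pt] _; apply: output_le_value.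
Qed.

Local Notation wmax := (Num.max ws (Num.max wb wt)).

Lemma in_Rb_Fm_lt1 : in_Rb F c h m -> F m < 1.
Proof.
rewrite /in_Rb gt_max /wbar_b => /andP[+ _]; case: ifP => // _.
by rewrite ltNge Fh_ge0.
Qed.

Lemma mu_lt_nm : in_Rb F c h m -> ~ in_K F c mu m -> mu < nm.
Proof.
by move=> /in_Rb_Fm_lt1 Fm1 notK; rewrite ltNge; apply/negP => ?; apply: notK.
Qed.

Lemma equilibrium_Rs : in_Rs F c h m ->
  equilibrium (Alloc 1 0 0 mu 0 0) wmax (F m).
Proof.
rewrite /in_Rs ge_max => /andP[wb_le wt_le].
have -> : wmax = F h by rewrite max_l // ge_max wb_le wt_le.
split => //.
- split => /=; [by split|by split => //; exact: ltW|by rewrite !mul0r|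
    by rewrite !addr0|by rewrite ltxx].
- split; rewrite /profit_s /profit_a ?subrr //.
  + by move=> Fm1; rewrite profit_b_wbar // subrr mulr0 addr0 subr_le0.
  + by rewrite profit_t_wbar subrr addr0 pmulr_rle0 ?nn_gt0 // subr_le0.
- by split; rewrite /= ?ltxx // /profit_s /profit_a subrr.
Qed.

Lemma equilibrium_Rb_K : in_Rb F c h m -> in_K F c mu m ->
  equilibrium (Alloc 0 1 0 (mu - nm) nm 0) wmax (F m).
Proof.
rewrite /in_Rb gt_max => /andP[ws_lt wt_lt] [Fm1 nm_le].
have -> : wmax = wb by rewrite (max_l (ltW wt_lt)) max_r // ltW.
have nm_gt0 := nn_gt0 Fm1.
have pb0 : profit_b F c h m wb (F m) = 0.
  by rewrite profit_b_wbar // !subrr mulr0 addr0.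
split => //.
- split => /=; [by split|by split; rewrite ?subr_ge0 // ltW|
    by rewrite mul1r mul0r|by split; lra|by []].
- exact/ltW/(le_lt_trans Fh_ge0).
- split.
  + by rewrite /profit_s subr_le0 ltW.
  + by rewrite /profit_a subrr.
  + by rewrite pb0.
  + by rewrite profit_t_wbar subrr addr0 pmulr_rle0 ?nn_gt0 // subr_le0 ltW.
- by split; rewrite /= ?ltxx // /profit_a subrr.
Qed.

Lemma in_Rt_wbar : in_Rt F c h m -> wb <= wt /\ ws < wt.
Proof.
rewrite /in_Rt /in_Rs /in_Rb => -[/negP + /negP].
by rewrite -ltNge -leNgt lt_max le_max => /orP[] ? /orP[] ?; split; lra.
Qed.

Lemma equilibrium_Rt : in_Rt F c h m ->
  equilibrium (Alloc 0 0 1 (mu - nh^-1) 0 nh^-1) wmax (F m).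
Proof.
move=> /in_Rt_wbar[wb_le ws_lt].
have -> : wmax = wt by rewrite (max_r wb_le) max_r // ltW.
have inv_nh_gt0 : 0 < nh^-1 by rewrite invr_gt0 nn_gt0.
have pt0 : profit_t F c h m wt (F m) = 0.
  by rewrite profit_t_wbar !subrr mulr0 addr0.
split => //.
- split => /=; [by split|by split; rewrite ?subr_ge0 // ltW|
    by split; rewrite ?mul0r ?div1r|by split; lra|by rewrite ltxx].
- exact/ltW/(le_lt_trans Fh_ge0).
- split.
  + by rewrite /profit_s subr_le0 ltW.
  + by rewrite /profit_a subrr.
  + by move=> Fm1; rewrite profit_b_wbar // subrr mulr0 addr0 subr_le0.
  + by rewrite pt0.
- by split; rewrite /= ?ltxx // /profit_a subrr.
Qed.

Local Notation D := (nm * nh - 1).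
Local Notation w_bt := (wb - nm * nh * (wb - wt) / D).
Local Notation r_bt := (F m + nh * (wb - wt) / D).

(* The prices of case (b) are the unique solution of the two zero-profit
   conditions of bottom- and top-automated firms. *)
Lemma profit_b_bt : F m < 1 -> profit_b F c h m w_bt r_bt = 0.
Proof. by move=> Fm1; rewrite profit_b_wbar //; ring. Qed.

Lemma profit_t_bt : D != 0 -> profit_t F c h m w_bt r_bt = 0.
Proof. by move=> D_neq0; rewrite profit_t_wbar; field. Qed.

Lemma equilibrium_Rb_Rm : in_Rb F c h m -> ~ in_K F c mu m -> in_Rm F c h m ->
  exists a, [/\ al_s a = 0, mu_s a = 0 & equilibrium a w_bt r_bt].
Proof.
move=> Rb notK Rm; have Fm1 := in_Rb_Fm_lt1 Rb; have mu_lt := mu_lt_nm Rb notK.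
move: Rb; rewrite /in_Rb gt_max => /andP[_ wt_lt].
have nh_gt0 : 0 < nh := nn_gt0 Fh_lt1.
have nm_gt0 : 0 < nm := nn_gt0 Fm1.
have inv_nh_lt : nh^-1 < nm := le_lt_trans mu_ge_inv_nh mu_lt.
have D_gt0 : 0 < D by rewrite subr_gt0 -(mulVf nh_neq0) ltr_pM2r.
have D_neq0 : D != 0 by rewrite gt_eqF.
(* the share of bottom-automated firms that employs exactly mu machines *)
set ab := (mu - nh^-1) / (nm - nh^-1).
have ab_ge0 : 0 <= ab by apply: divr_ge0; rewrite subr_ge0 // ltW.
have ab_le1 : ab <= 1 by rewrite ler_pdivrMr ?subr_gt0 // mul1r lerD2r ltW.
have w_ge : F h <= w_bt.
  have -> : w_bt = F h + (nm * nh * (wt - ws) - (wb - ws)) / D.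
    by rewrite /wbar_s; field.
  by rewrite lerDl; apply: divr_ge0; [rewrite subr_ge0; exact: Rm | exact: ltW].
have r_ge : F m <= r_bt.
  rewrite lerDl; apply: divr_ge0; last exact: ltW.
  by apply: mulr_ge0; [exact: ltW | rewrite subr_ge0 ltW].
exists (Alloc 0 ab (1 - ab) 0 (ab * nm) ((1 - ab) / nh)); split => //; split.
- split => /=.
  + by split; rewrite ?subr_ge0.
  + split => //; first by apply: mulr_ge0; rewrite // ltW.
    by apply: divr_ge0; rewrite ?subr_ge0 // ltW.
  + by [].
  + by split; [lra | rewrite /ab; field; rewrite nh_neq0 D_neq0].
  + by [].
- exact: le_trans w_ge.
- exact: le_trans r_ge.
- split.
  + by rewrite /profit_s subr_le0.
  + by rewrite /profit_a subr_le0.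
  + by rewrite profit_b_bt.
  + by rewrite profit_t_bt.
- by split; rewrite /= ?ltxx // ?profit_b_bt ?profit_t_bt.
Qed.

Lemma equilibrium_Rb_notRm :
  in_Rb F c h m -> ~ in_K F c mu m -> ~ in_Rm F c h m ->
  equilibrium (Alloc (1 - mu / nm) (mu / nm) 0 0 mu 0) (F h) (Fv - F h / nm).
Proof.
move=> Rb notK /negP; rewrite /in_Rm -ltNge => Rm_lt.
have Fm1 := in_Rb_Fm_lt1 Rb; have mu_lt := mu_lt_nm Rb notK.
move: Rb; rewrite /in_Rb gt_max => /andP[ws_lt _].
have nm_gt0 : 0 < nm := nn_gt0 Fm1.
have r_margin : Fv - F h / nm - F m = (wb - ws) / nm.
  by rewrite /wbar_b Fm1 /wbar_s; field; rewrite gt_eqF.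
have r_gt : F m < Fv - F h / nm.
  by rewrite -subr_gt0 r_margin divr_gt0 // subr_gt0.
have pb0 : profit_b F c h m (F h) (Fv - F h / nm) = 0.
  by rewrite /profit_b; field; rewrite gt_eqF.
have pt_lt0 : profit_t F c h m (F h) (Fv - F h / nm) < 0.
  rewrite profit_t_wbar.
  have -> : F m - (Fv - F h / nm) = - ((wb - ws) / nm) by rewrite -r_margin; ring.
  rewrite subr_lt0 ltr_pdivlMr //.
  by rewrite mulrC mulrA.
split.
- have mu_nm_le1 : mu / nm <= 1 by rewrite ler_pdivrMr // mul1r ltW.
  split => /=.
  + by split; [rewrite subr_ge0 | apply: divr_ge0; exact: ltW |].
  + by split => //; exact: ltW.
  + by split; [rewrite divfK // gt_eqF | rewrite mul0r].
  + by split; lra.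
  + by [].
- by [].
- exact: le_trans (ltW r_gt).
- split.
  + by rewrite /profit_s subrr.
  + by rewrite /profit_a subr_le0 ltW.
  + by rewrite pb0.
  + exact: ltW.
- by split; rewrite /= ?ltxx // /profit_s subrr.
Qed.

Lemma equilibrium_exists : exists a w r, equilibrium a w r.
Proof.
have [Rs|notRs] := boolP (in_Rs F c h m).
  by do 3 eexists; apply: equilibrium_Rs.
have [Rb|notRb] := boolP (in_Rb F c h m); last first.
  by do 3 eexists; apply: equilibrium_Rt; split; apply/negP.
have Fm1 := in_Rb_Fm_lt1 Rb.
have [K|notK] := boolP (nm <= mu).
  by do 3 eexists; apply: equilibrium_Rb_K.
have {}notK : ~ in_K F c mu m by case=> _; apply/negP.
have [Rm|notRm] := boolP (in_Rm F c h m).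
  have [a [_ _ eq_a]] := equilibrium_Rb_Rm Rb notK Rm.
  by do 3 eexists; exact: eq_a.
by do 3 eexists; apply: equilibrium_Rb_notRm => //; apply/negP.
Qed.

End Equilibria.

Theorem proposition5 (R : realType) (f : R * R -> R) (c mu : R) (h : R * R) :
  full_support_density f ->
  0 < c < 1 ->
  (0 < h.1 < 1) /\ (0 < h.2 < 1) ->
  0 < mu ->
  (nn (cdf2 f) c h)^-1 <= mu ->
  let F := cdf2 f in
  let wmax m := Num.max (wbar_s F h)
                  (Num.max (wbar_b F c h m) (wbar_t F c h m)) in
  (forall m : R * R, m \in unit_sq ->
     exists a w r, equilibrium F c h mu m a w r) /\
  (forall (m : R * R) a w r, m \in unit_sq ->
     equilibrium F c h mu m a w r -> output_max F c h mu m a) /\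
  (forall m : R * R, m \in unit_sq -> in_Rs F c h m ->
     equilibrium F c h mu m (Alloc 1 0 0 mu 0 0) (wmax m) (F m)) /\
  (forall m : R * R, m \in unit_sq -> in_Rb F c h m -> in_K F c mu m ->
     equilibrium F c h mu m (Alloc 0 1 0 (mu - nn F c m) (nn F c m) 0)
       (wmax m) (F m)) /\
  (forall m : R * R, m \in unit_sq -> in_Rt F c h m ->
     equilibrium F c h mu m
       (Alloc 0 0 1 (mu - (nn F c h)^-1) 0 (nn F c h)^-1)
       (wmax m) (F m)) /\
  (forall m : R * R, m \in unit_sq -> in_Rb F c h m -> ~ in_K F c mu m ->
     in_Rm F c h m ->
     let D := nn F c m * nn F c h - 1 in
     exists a, [/\ al_s a = 0, mu_s a = 0 &
       equilibrium F c h mu m a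
         (wbar_b F c h m - nn F c m * nn F c h
                           * (wbar_b F c h m - wbar_t F c h m) / D)
         (F m + nn F c h * (wbar_b F c h m - wbar_t F c h m) / D)]) /\
  (forall m : R * R, m \in unit_sq -> in_Rb F c h m -> ~ in_K F c mu m ->
     ~ in_Rm F c h m ->
     equilibrium F c h mu m
       (Alloc (1 - mu / nn F c m) (mu / nn F c m) 0 0 mu 0)
       (F h) (F (vjoin m h) - F h / nn F c m)).
Proof.
move=> f_density /andP[c_gt0 _] [/andP[h1_gt0 h1_lt1] /andP[h2_gt0 h2_lt1]].
move=> mu_gt0 mu_ge_inv_nh F wmax.
have hU : h \in unit_sq by apply/in_unit_sq; rewrite !ltW.
have Fh_ge0 : 0 <= F h := cdf2_ge0 f_density hU.
have Fh_lt1 : F h < 1 := cdf2_lt1 f_density hU h1_lt1 h2_lt1.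
have F_ge0 m : m \in unit_sq -> 0 <= F m := cdf2_ge0 f_density.
split; first by move=> m /F_ge0 Fm_ge0; exact: equilibrium_exists.
split; first by move=> m a w r _; exact: equilibrium_output_max.
split; first by move=> m /F_ge0 Fm_ge0; exact: equilibrium_Rs.
split; first by move=> m /F_ge0 Fm_ge0; exact: equilibrium_Rb_K.
split; first by move=> m /F_ge0 Fm_ge0; exact: equilibrium_Rt.
split; first by move=> m /F_ge0 Fm_ge0 Rb notK Rm D; exact: equilibrium_Rb_Rm.
by move=> m /F_ge0 Fm_ge0; exact: equilibrium_Rb_notRm.
Qed.
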